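(* Let $X$ be a real Banach space and let $Y\subset X^*$ be a $w^*$-dense and norm-closed linear subspace. Then the locally convex space $(X,\mu(X,Y))$ is quasi-complete if and only if it is complete.
   Context: For a $w^*$-dense linear subspace $Y\subset X^*$ (not necessarily norm-closed), $\mu(X,Y)$ denotes the Mackey topology on $X$ associated to the dual pair $\langle X,Y\rangle$, i.e. the locally convex topology on $X$ of uniform convergence on the members of the family of all absolutely convex $w^*$-compact subsets of $Y$. A locally convex space is quasi-complete if every bounded closed subset of it is complete. *)

From HB Require Import structures.
From mathcomp Require Import all_boot all_order all_algebra.
From mathcomp Require Import all_classical all_reals all_analysis.
Set Implicit Arguments. Unset Strict Implicit. Unset Printing Implicit Defensive.
Import Order.TTheory GRing.Theory Num.Theory.
Import numFieldNormedType.Exports.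
Local Open Scope classical_set_scope.
Local Open Scope ring_scope.

Definition dual_space (R : realType) (X : normedModType R) : set (X -> R) :=
  [set f | (forall (a : R) (x y : X), f (a *: x + y) = a * f x + f y)
           /\ continuous f].

Definition dual_subspace (R : realType) (X : normedModType R) (Y : set (X -> R)) :=
  Y `<=` @dual_space R X /\ Y (fun _ => 0) /\
  (forall (a : R) f g, Y f -> Y g -> Y (fun x => a * f x + g x)).

(* w*-density: Y is dense in X^* for the weak-star topology, i.e. the
   topology of pointwise convergence on X (subspace of the product R^X). *)
Definition weak_star_dense (R : realType) (X : normedModType R) (Y : set (X -> R)) :=
  @dual_space R X `<=` closure (Y : set {ptws X -> R}).

(* Norm-closedness of Y in X^* for the dual norm
   ||f|| = sup_{||x|| <= 1} |f x|:  ||f - g|| <= e  iff  |f x - g x| <= e ||x||. *)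
Definition dual_norm_closed (R : realType) (X : normedModType R) (Y : set (X -> R)) :=
  forall f, @dual_space R X f ->
    (forall e : R, 0 < e -> exists2 g, Y g &
        forall x : X, `|f x - g x| <= e * `|x|) ->
    Y f.

Definition abs_convex (R : realType) (X : normedModType R) (K : set (X -> R)) :=
  forall f g (a b : R), K f -> K g -> `|a| + `|b| <= 1 ->
    K (fun x => a * f x + b * g x).

(* The family defining mu(X,Y): absolutely convex w*-compact subsets of Y *)
Definition mackey_family (R : realType) (X : normedModType R) (Y : set (X -> R))
    (K : set (X -> R)) :=
  K `<=` Y /\ abs_convex K /\ compact (K : set {ptws X -> R}).

Definition mackey_close (R : realType) (X : normedModType R) (Y : set (X -> R))
    (K : set (X -> R)) (e : R) (x y : X) :=
  forall f, K f -> `|f x - f y| < e.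

Definition mackey_cauchy (R : realType) (X : normedModType R) (Y : set (X -> R))
    (F : set_system X) :=
  forall K e, mackey_family Y K -> 0 < e ->
    exists2 A, F A & forall x y, A x -> A y -> mackey_close Y K e x y.

Definition mackey_converges (R : realType) (X : normedModType R) (Y : set (X -> R))
    (F : set_system X) (x : X) :=
  forall K e, mackey_family Y K -> 0 < e -> F [set y | mackey_close Y K e y x].

Definition mackey_bounded (R : realType) (X : normedModType R) (Y : set (X -> R))
    (B : set X) :=
  forall K, mackey_family Y K -> exists M : R, forall x f, B x -> K f -> `|f x| <= M.

Definition mackey_closed (R : realType) (X : normedModType R) (Y : set (X -> R))
    (B : set X) :=
  forall x, (forall K e, mackey_family Y K -> 0 < e ->
               exists2 b, B b & mackey_close Y K e b x) -> B x.

(* A subset B is complete: every proper Cauchy filter on X containing B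
   (i.e. a Cauchy filter on B) converges to a point of B. *)
Definition mackey_complete_set (R : realType) (X : normedModType R) (Y : set (X -> R))
    (B : set X) :=
  forall F : set_system X, ProperFilter F -> F B -> mackey_cauchy Y F ->
    exists2 x, B x & mackey_converges Y F x.

Definition mackey_complete (R : realType) (X : normedModType R) (Y : set (X -> R)) :=
  mackey_complete_set Y setT.

Definition mackey_quasi_complete (R : realType) (X : normedModType R)
    (Y : set (X -> R)) :=
  forall B : set X, mackey_bounded Y B -> mackey_closed Y B -> mackey_complete_set Y B.

From HB Require Import structures.
From mathcomp Require Import all_boot all_order all_algebra.
From mathcomp Require Import all_classical all_reals all_analysis.
From mathcomp Require Import ring lra.
Import Order.TTheory GRing.Theory Num.Theory.
Import numFieldNormedType.Exports.
Local Open Scope classical_set_scope.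
Local Open Scope ring_scope.
Set Implicit Arguments. Unset Strict Implicit. Unset Printing Implicit Defensive.

(* Complete implies quasi-complete since Mackey-closed subsets of a complete
   space are complete.  Conversely, let F be a Mackey-Cauchy filter.  Since Y is
   norm-closed, any z_n in Y with ||z_n|| <= 2^-n generates the absolutely convex
   w*-compact set {sum_n a_n z_n : |a_n| <= 1} inside Y; being Cauchy on such
   sets forces a constant c such that every y in the unit ball of Y is eventually
   bounded by c along F.  A minimax argument on w*-compact convex sets then shows
   that every member of F comes Mackey-close to the c-ball of X, which is
   Mackey-bounded by Banach-Steinhaus.  Hence the traces of the Mackey
   neighbourhoods of F on the Mackey closure of the c-ball, a bounded closed set,
   form a Cauchy filter, and its limit given by quasi-completeness is a limit of F. *)

Section LinearForms.
Variables (R : realType) (X : normedModType R).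

Definition linear_form (f : X -> R) :=
  forall (a : R) (x y : X), f (a *: x + y) = a * f x + f y.

Variables (f : X -> R) (lf : linear_form f).

Lemma linear_form0 : f 0 = 0.
Proof. by have := lf 1 0 0; rewrite scaler0 addr0 mul1r; lra. Qed.

Lemma linear_formZ a x : f (a *: x) = a * f x.
Proof. by have := lf a x 0; rewrite !addr0 linear_form0 addr0. Qed.

Lemma linear_formD x y : f (x + y) = f x + f y.
Proof. by have := lf 1 x y; rewrite scale1r mul1r. Qed.

Lemma linear_formN x : f (- x) = - f x.
Proof. by rewrite -scaleN1r linear_formZ mulN1r. Qed.

Lemma linear_formB x y : f (x - y) = f x - f y.
Proof. by rewrite linear_formD linear_formN. Qed.

Let pack : {linear X -> R^o} :=
  HB.pack f (GRing.isLinear.Build _ _ _ _ f (fun a u v => lf a u v)).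

Lemma linear_form_continuous_bounded : continuous f ->
  exists2 L : R, 0 <= L & forall x, `|f x| <= L * `|x|.
Proof.
move=> cf; have : continuous pack by [].
move=> /linear_bounded_continuous /linear_boundedP [M [Mreal fM]].
exists (Num.max M 0 + 1); first by rewrite addr_ge0 // le_max lexx orbT.
by apply: fM; rewrite ltr_pwDr // le_max lexx.
Qed.

Lemma linear_form_bounded_continuous (L : R) :
  (forall x, `|f x| <= L * `|x|) -> continuous f.
Proof.
move=> fL; suff : continuous pack by [].
apply/linear_bounded_continuous/linear_boundedP.
near=> M => x; apply: le_trans (fL x) _; apply: ler_wpM2r; first by [].
by near: M; apply: nbhs_pinfty_ge; rewrite num_real.
Unshelve. all: by end_near.
Qed.

Lemma linear_form_ball_bound (r m : R) : 0 < r ->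
  (forall w : X, `|w| <= r -> `|f w| <= m) -> forall x, `|f x| <= m / r * `|x|.
Proof.
move=> r0 fm x; have [->|x0] := eqVneq x 0.
  by rewrite linear_form0 normr0 normr0 mulr0.
have nx : 0 < `|x| by rewrite normr_gt0.
have rx0 : 0 <= r / `|x| by rewrite divr_ge0 // ltW.
have := fm ((r / `|x|) *: x).
rewrite normrZ (ger0_norm rx0) divfK ?normr_eq0 // lexx => /(_ isT).
rewrite linear_formZ normrM (ger0_norm rx0) -ler_pdivlMl ?divr_gt0 //.
by rewrite invf_div mulrAC -mulrA mulrC => /le_trans; apply; rewrite mulrC.
Qed.

End LinearForms.

Section DualSpace.
Variables (R : realType) (X : normedModType R).

Lemma dual_space_linear (f : X -> R) : dual_space f -> linear_form f.
Proof. by case. Qed.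

Lemma dual_space_bounded (f : X -> R) : dual_space f ->
  exists2 L : R, 0 <= L & forall x, `|f x| <= L * `|x|.
Proof. by case=> lf cf; exact: linear_form_continuous_bounded. Qed.

Variable Y : set (X -> R).
Hypothesis HY : dual_subspace Y.

Lemma dual_subspaceZ (a : R) f : Y f -> Y (fun x => a * f x).
Proof. by move=> Yf; have := HY.2.2 a f _ Yf HY.2.1; under eq_fun do rewrite addr0. Qed.

Lemma dual_subspaceD f g : Y f -> Y g -> Y (fun x => f x + g x).
Proof. by move=> Yf Yg; have := HY.2.2 1 f g Yf Yg; under eq_fun do rewrite mul1r. Qed.

End DualSpace.

Lemma ler_norm_dist (R : realType) (a b : R) : `|a| <= `|b| + `|b - a|.
Proof. by have := ler_distD b a 0; rewrite !subr0 distrC addrC. Qed.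

Section PointwiseTopology.
Variables (R : realType) (X : normedModType R).
Local Notation ptws := {ptws X -> R}.

Lemma ptws_eval_continuous (x : X) : continuous (fun f : ptws => f x).
Proof. exact: (@proj_continuous X (fun _ => R) x). Qed.

Lemma ptws_evalB_continuous (x y : X) : continuous (fun f : ptws => f x - f y).
Proof.
move=> f; have ex := @ptws_eval_continuous x f; have ey := @ptws_eval_continuous y f.
exact: (cvgB ex ey).
Qed.

Definition ptws_add (p : ptws * ptws) : ptws := fun x => p.1 x + p.2 x.

Lemma ptws_add_continuous : continuous ptws_add.
Proof.
move=> p; apply: (proj2 (@pointwise_cvgP X R (ptws_add @ nbhs p) (ptws_add p) _)) => x.
have e1 : (fun q : ptws * ptws => q.1 x) @ nbhs p --> p.1 x.
  have h : (fun q : ptws * ptws => q.1) @ nbhs p --> nbhs p.1 by exact: cvg_fst.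
  exact: cvg_comp h (@ptws_eval_continuous x p.1).
have e2 : (fun q : ptws * ptws => q.2 x) @ nbhs p --> p.2 x.
  have h : (fun q : ptws * ptws => q.2) @ nbhs p --> nbhs p.2 by exact: cvg_snd.
  exact: cvg_comp h (@ptws_eval_continuous x p.2).
exact: (cvgD e1 e2).
Qed.

End PointwiseTopology.
Arguments ptws_add {R X}.
Arguments ptws_eval_continuous {R X} x x0 [t].
Arguments ptws_evalB_continuous {R X} x y.

(* [compact_cover] needs a pointed space, which [{ptws X -> R}] is not. *)
Lemma compact_finite_subcover (T : topologicalType) (A : set T) (I : eqType) (D : set I)
    (U : I -> set T) : compact A -> (forall i, D i -> open (U i)) ->
    (forall x, A x -> exists2 i, D i & U i x) ->
  exists2 s : seq I, (forall i, i \in s -> D i) & forall x, A x -> exists2 i, i \in s & U i x.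
Proof.
move=> cA oU AU; apply: contrapT => no_cover.
pose avoid (s : seq I) := A `&` [set x | forall i, i \in s -> ~ U i x].
have avoid_nonempty s : (forall i, i \in s -> D i) -> avoid s !=set0.
  move=> sD; apply: contrapT => /nonemptyPn avoid0; apply: no_cover; exists s => // x Ax.
  apply: contrapT => no_i; suff : avoid s x by rewrite avoid0.
  by split=> // i si Uix; apply: no_i; exists i.
pose G := filter_from [set s : seq I | forall i, i \in s -> D i] avoid.
have GF : ProperFilter G.
  apply: filter_from_proper => [|s /avoid_nonempty //].
  apply: filter_from_filter; first by exists [::].
  move=> s1 s2 s1D s2D; exists (s1 ++ s2).
    by move=> i; rewrite mem_cat => /orP [/s1D|/s2D].
  by move=> x [Ax h]; split; split=> // i si; apply: h; rewrite mem_cat si ?orbT.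
have GA : G A by exists [::] => // x [].
have [x [Ax clx]] := cA G GF GA.
have [i Di Uix] := AU x Ax.
have Gi : G (avoid [:: i]) by exists [:: i] => // j; rewrite inE => /eqP ->.
have [y [[_ yi] Uiy]] := clx _ _ Gi (open_nbhs_nbhs (conj (oU i Di) Uix)).
by apply: (yi i) => //; rewrite inE.
Qed.

Lemma closed_ge_continuous (R : realType) (T : topologicalType) (phi : T -> R) (e : R) :
  continuous phi -> closed [set t | e <= phi t].
Proof.
move=> cphi; apply: (@preimage_closed _ _ phi [set x | e <= x]); last exact: closed_ge.
by move=> t _; exact: cphi.
Qed.
Arguments closed_ge_continuous {R T phi} e.

Lemma compact_dual_uniformly_bounded (R : realType) (X : completeNormedModType R)
    (K : set (X -> R)) : K `<=` @dual_space R X -> compact (K : set {ptws X -> R}) ->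
  exists2 L : R, 0 <= L & forall f x, K f -> `|f x| <= L * `|x|.
Proof.
move=> KD cK.
have pK : pointwise_bounded K.
  move=> x; have cKx : compact ((fun f : {ptws X -> R} => f x) @` (K : set {ptws X -> R})).
    apply: continuous_compact cK.
    by apply: continuous_subspaceT; exact: ptws_eval_continuous.
  have [M [_ hM]] := compact_bounded cKx.
  exists (M + 1) => f Kf.
  have := hM (M + 1); rewrite ltrDl ltr01 => /(_ isT (f x)).
  by apply; exists f.
have /(_ 1) [M hM] : uniform_bounded K.
  apply: (@Banach_Steinhauss R X R K) pK => f /KD Df; split; last first.
    by move=> a u v; rewrite (dual_space_linear Df).
  have [L L0 fL] := dual_space_bounded Df.
  move=> r; exists (L * `|r|) => x xr.
  by apply: le_trans (fL x) _; rewrite ler_wpM2l // (le_trans xr) ?ler_norm.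
exists (Num.max M 0) => [|f x Kf]; first by rewrite le_max lexx orbT.
have := linear_form_ball_bound (dual_space_linear (KD f Kf)) ltr01 (hM f Kf) x.
by rewrite divr1 => /le_trans; apply; rewrite ler_wpM2r // le_max lexx.
Qed.

Section AbsConvex.
Variables (R : realType) (X : normedModType R).

Definition convex_functionals (K : set (X -> R)) :=
  forall f g (s : R), K f -> K g -> 0 <= s <= 1 -> K (fun x => (1 - s) * f x + s * g x).

Variable K : set (X -> R).
Hypothesis acK : abs_convex K.

Lemma abs_convex0 f : K f -> K (fun _ => 0).
Proof.
move=> Kf; have := @acK f f 0 0 Kf Kf; rewrite normr0 addr0 ler01 => /(_ isT).
by under eq_fun do rewrite !mul0r addr0.
Qed.

Lemma abs_convexN f : K f -> K (fun x => - f x).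
Proof.
move=> Kf; have := @acK f f (-1) 0 Kf Kf; rewrite normrN normr1 normr0 addr0 lexx.
by move=> /(_ isT); under eq_fun do rewrite mul0r addr0 mulN1r.
Qed.

Lemma abs_convex_convex : convex_functionals K.
Proof.
move=> f g s Kf Kg /andP [s0 s1]; apply: acK => //.
by rewrite (ger0_norm s0) ger0_norm ?subr_ge0 // subrK.
Qed.

End AbsConvex.

Section MackeyFamily.
Variables (R : realType) (X : completeNormedModType R) (Y : set (X -> R)).
Hypothesis HY : dual_subspace Y.
Local Notation ptws := {ptws X -> R}.

Lemma mackey_family0 : mackey_family Y set0.
Proof. by split=> //; split; [move=> f g a b [] | exact: compact0]. Qed.

Lemma mackey_family_bounded K : mackey_family Y K ->
  exists2 L : R, 0 <= L & forall f x, K f -> `|f x| <= L * `|x|.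
Proof.
move=> [KY [_ cK]]; apply: compact_dual_uniformly_bounded cK.
by move=> f /KY; apply: HY.1.
Qed.

Lemma mackey_family_directed K1 K2 : mackey_family Y K1 -> mackey_family Y K2 ->
  exists K, [/\ mackey_family Y K, K1 `<=` K & K2 `<=` K].
Proof.
move=> fK1 fK2; have [[f1 K1f1]|/nonemptyPn K10] := pselect (K1 !=set0); last first.
  by exists K2; split=> //; rewrite K10.
have [[f2 K2f2]|/nonemptyPn K20] := pselect (K2 !=set0); last first.
  by exists K1; split=> //; rewrite K20.
move: fK1 fK2 => [K1Y [ac1 cK1]] [K2Y [ac2 cK2]].
exists (ptws_add @` ((K1 : set ptws) `*` (K2 : set ptws))); split.
- split; first by move=> _ [[f g] [/= /K1Y Yf /K2Y Yg] <-]; exact: dual_subspaceD.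
  split; last first.
    apply: continuous_compact; last exact: compact_setX.
    by apply: continuous_subspaceT; exact: ptws_add_continuous.
  move=> _ _ a b [[f1' g1'] [/= Kf1 Kg1] <-] [[f2' g2'] [/= Kf2 Kg2] <-] ab.
  exists ((fun x => a * f1' x + b * f2' x), (fun x => a * g1' x + b * g2' x)).
    by split; [apply: ac1 | apply: ac2].
  by apply/funext => x; rewrite /ptws_add /=; ring.
- move=> f Kf; exists (f, fun _ => 0); first by split=> //; exact: abs_convex0 K2f2.
  by apply/funext => x; rewrite /ptws_add /= addr0.
- move=> g Kg; exists (fun _ => 0, g); first by split=> //; exact: abs_convex0 K1f1.
  by apply/funext => x; rewrite /ptws_add /= add0r.
Qed.

End MackeyFamily.

Lemma mackey_bounded_ball (R : realType) (X : completeNormedModType R) (Y : set (X -> R))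
    (c : R) : dual_subspace Y -> mackey_bounded Y [set z : X | `|z| <= c].
Proof.
move=> HY K fK; have [L L0 KL] := mackey_family_bounded HY fK.
by exists (L * c) => x f xc Kf; apply: le_trans (KL f x Kf) _; rewrite ler_wpM2l.
Qed.

Section MackeyClosure.
Variables (R : realType) (X : normedModType R) (Y : set (X -> R)).

Definition mackey_closure (S : set X) : set X :=
  [set x | forall K e, mackey_family Y K -> 0 < e -> exists2 s, S s & mackey_close Y K e s x].

Lemma mackey_close_sym K e x y : mackey_close Y K e x y -> mackey_close Y K e y x.
Proof. by move=> xy f Kf; rewrite distrC; exact: xy. Qed.

Lemma mackey_close_trans K e1 e2 x y z :
  mackey_close Y K e1 x y -> mackey_close Y K e2 y z -> mackey_close Y K (e1 + e2) x z.
Proof. by move=> xy yz f Kf; apply: le_lt_trans (ler_distD (f y) _ _) (ltrD (xy f Kf) (yz f Kf)). Qed.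

Lemma mackey_closure_closed S : mackey_closed Y (mackey_closure S).
Proof.
move=> x x_adh K e fK e0; have e2 : 0 < e / 2 by rewrite divr_gt0.
have [b Sb bx] := x_adh K _ fK e2; have [s Ss sb] := Sb K _ fK e2.
by exists s => //; rewrite (splitr e); exact: mackey_close_trans sb bx.
Qed.

Lemma mackey_closure_bounded S : mackey_bounded Y S -> mackey_bounded Y (mackey_closure S).
Proof.
move=> bS K fK; have [M SM] := bS K fK; exists (M + 1) => x f Sx Kf.
have [s Ss sx] := Sx K 1 fK ltr01.
apply: le_trans (ler_norm_dist (f x) (f s)) _.
by apply: lerD; [exact: SM | exact/ltW/sx].
Qed.

End MackeyClosure.

Section Crossing.
Variable R : realType.

(* [crossing e a b] is the [t] at which [t * a + (1 - t) * b] reaches [e]. *)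
Definition crossing (e a b : R) := (e - b) / (a - b).

Lemma crossing_lt_segment (x1 y1 x2 y2 e : R) : e <= x1 -> y1 < e -> x2 < e -> e <= y2 ->
  let s := (x1 - y1) / ((x1 - y1) + (y2 - x2)) in
  (1 - s) * x1 + s * x2 < e \/ (1 - s) * y1 + s * y2 < e ->
  crossing e x2 y2 < crossing e x1 y1.
Proof.
move=> ex1 y1e x2e ey2 s hs.
have d1 : x1 - y1 != 0 by rewrite subr_eq0 gt_eqF // (lt_le_trans y1e).
have d2 : y2 - x2 != 0 by rewrite subr_eq0 gt_eqF // (lt_le_trans x2e).
have d3 : x2 - y2 != 0 by rewrite -opprB oppr_eq0.
have dD : 0 < (x1 - y1) + (y2 - x2) by lra.
pose V := (y2 - x2) * (x1 - e) + (x1 - y1) * (x2 - e).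
(* the point of the segment selected by [s] lies on the diagonal *)
have s_diag : (1 - s) * x1 + s * x2 = e + V / ((x1 - y1) + (y2 - x2))
             /\ (1 - s) * y1 + s * y2 = e + V / ((x1 - y1) + (y2 - x2)).
  by rewrite /s /V; split; field; rewrite gt_eqF.
have V0 : V < 0.
  have : V / ((x1 - y1) + (y2 - x2)) < 0 by case: s_diag hs => -> -> [] ?; lra.
  by rewrite pmulr_llt0 // invr_gt0.
have -> : crossing e x1 y1 = crossing e x2 y2 + (- V) / ((x1 - y1) * (y2 - x2)).
  by rewrite /crossing /V; field; rewrite d1 d2 d3.
by rewrite ltrDl divr_gt0 ?mulr_gt0; lra.
Qed.

Lemma lt_crossing_comb (e a b t : R) : 0 < t <= 1 -> a < e \/ b < e ->
    (e <= a -> t < crossing e a b) -> (e <= b -> crossing e a b < t) ->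
  t * a + (1 - t) * b < e.
Proof.
rewrite /crossing => /andP [t0 t1] hab ha hb.
have [ea|ae] := leP e a.
  have ba : 0 < a - b by case: hab; lra.
  by move: (ha ea); rewrite ltr_pdivlMr // mulrBr; lra.
have [eb|be] := leP e b; last by nra.
have ab : a - b < 0 by lra.
by move: (hb eb); rewrite ltr_ndivrMr // mulrBr; lra.
Qed.

End Crossing.

Section Minimax.
Variables (R : realType) (X : normedModType R).
Local Notation ptws := {ptws X -> R}.

Lemma ptws_crossing_continuous (w1 w2 : X) (e : R) (f : ptws) : f w1 != f w2 ->
  {for f, continuous (fun g : ptws => crossing e (g w1) (g w2))}.
Proof.
move=> f12; rewrite /crossing.
have ew1 := ptws_eval_continuous w1 f; have ew2 := ptws_eval_continuous w2 f.
have num : (fun g : ptws => e - g w2) @ nbhs f --> e - f w2.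
  exact: (cvgB (cvg_cst e) ew2).
have dif : (fun g : ptws => g w1 - g w2) @ nbhs f --> f w1 - f w2.
  exact: (cvgB ew1 ew2).
have den : (fun g : ptws => (g w1 - g w2)^-1) @ nbhs f --> (f w1 - f w2)^-1.
  by apply: (cvgV _ dif); rewrite subr_eq0.
exact: (cvgM num den).
Qed.

Lemma crossing_gap (K : set (X -> R)) (w1 w2 : X) (e : R) :
    convex_functionals K -> compact (K : set ptws) ->
    (forall f, K f -> f w1 < e \/ f w2 < e) ->
    (exists2 f, K f & e <= f w1) -> (exists2 f, K f & e <= f w2) ->
  exists2 t : R, 0 < t <= 1 &
    (forall f, K f -> e <= f w1 -> t < crossing e (f w1) (f w2)) /\
    (forall f, K f -> e <= f w2 -> crossing e (f w1) (f w2) < t).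
Proof.
(* Minimise the crossing over [K1] and maximise it over [K2]; were the minimum
   not above the maximum, a convex combination of the two extremal functionals
   would violate the hypothesis on [K]. *)
move=> cvK cK Kw [f0 Kf0 ef0] [g0 Kg0 eg0].
pose r (g : ptws) := crossing e (g w1) (g w2).
have r_cont g : K g -> e <= g w1 \/ e <= g w2 -> {for g, continuous r}.
  move=> Kg eg; apply: ptws_crossing_continuous; apply/eqP => g12.
  by case: (Kw g Kg); case: eg; lra.
pose K1 := (K : set ptws) `&` [set f : ptws | e <= f w1].
pose K2 := (K : set ptws) `&` [set f : ptws | e <= f w2].
have [f1 /set_mem [Kf1 ef1] f1_min] : exists2 f1, f1 \in K1 & forall g, g \in K1 -> r f1 <= r g.
  apply: compact_EVT_min; first by exists f0.
    exact: compact_closedI cK (closed_ge_continuous e (ptws_eval_continuous _)).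
  apply: continuous_in_subspaceT => g /set_mem K1g.
  by case: K1g => Kg eg; exact: r_cont Kg (or_introl eg).
have [f2 /set_mem [Kf2 ef2] f2_max] : exists2 f2, f2 \in K2 & forall g, g \in K2 -> r g <= r f2.
  apply: compact_EVT_max; first by exists g0.
    exact: compact_closedI cK (closed_ge_continuous e (ptws_eval_continuous _)).
  apply: continuous_in_subspaceT => g /set_mem K2g.
  by case: K2g => Kg eg; exact: r_cont Kg (or_intror eg).
move: ef1 ef2 => /= ef1 ef2.
have f1w2 : f1 w2 < e by case: (Kw f1 Kf1); lra.
have f2w1 : f2 w1 < e by case: (Kw f2 Kf2); lra.
have r21 : r f2 < r f1.
  apply: (crossing_lt_segment ef1 f1w2 f2w1 ef2).
  set s := _ / _; apply: (Kw (fun x => (1 - s) * f1 x + s * f2 x)).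
  apply: cvK => //; apply/andP; split; first by rewrite divr_ge0 //; lra.
  by rewrite ler_pdivrMr ?mul1r; lra.
have r2_ge0 : 0 <= r f2 by rewrite /r /crossing -mulrNN -invrN divr_ge0 //=; lra.
have r1_le1 : r f1 <= 1 by rewrite /r /crossing ler_pdivrMr ?mul1r //=; lra.
exists ((r f1 + r f2) / 2); first by apply/andP; split; lra.
split=> f Kf ef.
  by have := f1_min f (mem_set (conj Kf ef)); rewrite -/(r f); lra.
by have := f2_max f (mem_set (conj Kf ef)); rewrite -/(r f); lra.
Qed.

Lemma minimax_two_points (K : set (X -> R)) (w1 w2 : X) (e : R) :
    convex_functionals K -> compact (K : set ptws) ->
    (forall f, K f -> f w1 < e \/ f w2 < e) ->
  exists2 t : R, 0 <= t <= 1 & forall f, K f -> t * f w1 + (1 - t) * f w2 < e.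
Proof.
move=> cvK cK Kw.
have [K1|K1_0] := pselect (exists2 f, K f & e <= f w1); last first.
  exists 1 => [|f Kf]; first by rewrite ler01 lexx.
  rewrite subrr mul0r addr0 mul1r ltNge.
  by apply/negP => ef; apply: K1_0; exists f.
have [K2|K2_0] := pselect (exists2 f, K f & e <= f w2); last first.
  exists 0 => [|f Kf]; first by rewrite lexx ler01.
  rewrite subr0 mul0r add0r mul1r ltNge.
  by apply/negP => ef; apply: K2_0; exists f.
have [t /andP [t_gt0 t_le1] [t_lt t_gt]] := crossing_gap cvK cK Kw K1 K2.
exists t => [|f Kf]; first by rewrite ltW.
by apply: lt_crossing_comb; [rewrite t_gt0 | exact: Kw | exact: t_lt | exact: t_gt].
Qed.

Lemma minimax_ball (zs : seq X) (x0 : X) (c e : R) : 0 <= c ->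
  {in zs, forall z, `|z| <= c} ->
  forall K : set (X -> R), K `<=` @dual_space R X -> convex_functionals K ->
  compact (K : set ptws) -> (forall f, K f -> exists2 z, z \in zs & f z - f x0 < e) ->
  exists2 w : X, `|w| <= c & forall f, K f -> f w - f x0 < e.
Proof.
(* Induction on [zs]: the induction hypothesis handles the functionals on
   which [z0] fails, and [minimax_two_points] combines [z0] with that point. *)
move=> c0; elim: zs => [|z0 zs IH] zs_c K KD cvK cK Kzs.
  by exists 0 => [|f /Kzs []]; rewrite ?normr0.
pose K' := (K : set ptws) `&` [set f : ptws | e <= f z0 - f x0].
have [w' w'c K'w'] : exists2 w', `|w'| <= c & forall f, K' f -> f w' - f x0 < e.
  apply: IH => [z zs_z||||].
  - by apply: zs_c; rewrite in_cons zs_z orbT.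
  - by move=> f [/KD].
  - move=> f g s [Kf /= ef] [Kg /= eg] s01; split; first exact: cvK.
    have lf := dual_space_linear (KD f Kf); have lg := dual_space_linear (KD g Kg).
    by move: s01 => /andP [s0 s1] /=; nra.
  - exact: compact_closedI cK (closed_ge_continuous e (ptws_evalB_continuous z0 x0)).
  - move=> f [Kf /= ef]; have [z] := Kzs f Kf.
    by rewrite in_cons => /orP [/eqP ->|zs_z] fz; [lra | exists z].
have [t /andP [t0 t1] Kt] : exists2 t : R, 0 <= t <= 1 &
    forall f, K f -> t * f (z0 - x0) + (1 - t) * f (w' - x0) < e.
  apply: minimax_two_points => // f Kf; rewrite !(linear_formB (dual_space_linear (KD f Kf))).
  have [ef|] := leP e (f z0 - f x0); last by left.
  by right; apply: K'w'.
exists (t *: z0 + (1 - t) *: w') => [|f Kf].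
  have z0c := zs_c z0 (mem_head _ _).
  rewrite (le_trans (ler_normD _ _)) // !normrZ (ger0_norm t0) ger0_norm ?subr_ge0 //.
  by nra.
have lf := dual_space_linear (KD f Kf); move: (Kt f Kf).
by rewrite !(linear_formB lf) (linear_formD lf) !(linear_formZ lf); nra.
Qed.

End Minimax.

Section GeometricDomination.
Variables (R : realType) (r : R).
Hypotheses (r_gt0 : 0 < r) (r_lt1 : r < 1).
Variables (u : R ^nat) (M : R).
Hypothesis u_dom : forall n, `|u n| <= M * r ^+ n.

Let M_ge0 : 0 <= M.
Proof. by have := u_dom 0; rewrite expr0 mulr1; apply: le_trans. Qed.

Lemma dominated_series_cvg : cvgn (series u).
Proof.
apply: normed_cvg; apply: (@series_le_cvg R _ (geometric M r)) => [n|n|n|] //=.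
  by rewrite mulr_ge0 // exprn_ge0 // ltW.
by apply: is_cvg_geometric_series; rewrite ger0_norm // ltW.
Qed.

Lemma dominated_series_tail N m : (N <= m)%N ->
  `|series u m - series u N| <= M * r ^+ N / (1 - r).
Proof.
move=> Nm; rewrite sub_series_geq //.
apply: le_trans (ler_norm_sum _ _ _) _; apply: le_trans (ler_sum _ (fun k _ => u_dom k)) _.
rewrite -mulr_sumr -(subnKC Nm) geometric_partial_tail -mulrA ler_wpM2l //.
by rewrite geometric_le_lim // ?exprn_ge0 ?ltW // ger0_norm ?ltW.
Qed.

Lemma dominated_series_lim_tail N :
  `|limn (series u) - series u N| <= M * r ^+ N / (1 - r).
Proof.
set B := M * r ^+ N / (1 - r).
have tail_near : \forall m \near \oo, `|series u m - series u N| <= B.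
  by near=> m; apply: dominated_series_tail; near: m; exact: nbhs_infty_ge.
have lo : series u N - B <= limn (series u).
  apply: limr_ge dominated_series_cvg _; apply: filterS tail_near => m.
  by rewrite ler_norml => /andP [? _]; lra.
have hi : limn (series u) <= series u N + B.
  apply: limr_le dominated_series_cvg _; apply: filterS tail_near => m.
  by rewrite ler_norml => /andP [_ ?]; lra.
by rewrite ler_norml; apply/andP; split; lra.
Unshelve. all: by end_near.
Qed.

End GeometricDomination.

Lemma exists_halfpow_le (R : realType) (e : R) : 0 < e -> exists N, (2^-1 : R) ^+ N <= e.
Proof.
move=> e0; have half_lt1 : `|2^-1 : R| < 1 by rewrite ger0_norm // invf_lt1 // ltr1n.
have [N _ hN] := cvgr0_norm_lt _ (cvg_expr half_lt1) _ e0.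
exists N; have := hN N (leqnn N); rewrite ger0_norm ?exprn_ge0 //; exact: ltW.
Qed.

Definition unit_cube (R : realType) : set (nat -> R) := [set a | forall n, `|a n| <= 1].
Arguments unit_cube {R}.

Lemma unit_cube_compact (R : realType) : compact (unit_cube : set {ptws nat -> R}).
Proof.
have c01 : compact [set x : R | `|x| <= 1].
  have -> : [set x : R | `|x| <= 1] = `[-1, 1]%classic.
    by apply/seteqP; split => x /=; rewrite in_itv /= ler_norml.
  exact: segment_compact.
exact: (@tychonoff nat (fun _ => R) (fun _ => [set x : R | `|x| <= 1]) (fun _ => c01)).
Qed.

Lemma unit_cube_comb (R : realType) (a b : nat -> R) (al be : R) :
  unit_cube a -> unit_cube b -> `|al| + `|be| <= 1 ->
  unit_cube (fun n => al * a n + be * b n).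
Proof.
move=> ca cb albe n; apply: le_trans (ler_normD _ _) _; rewrite !normrM.
apply: le_trans albe; apply: lerD; rewrite -{2}(mulr1 `|_|); exact: ler_wpM2l.
Qed.

Section SeriesHull.
Variables (R : realType) (X : normedModType R) (Y : set (X -> R)).
Hypotheses (HY : dual_subspace Y) (Ycl : dual_norm_closed Y).
Variable z : nat -> X -> R.
Hypotheses (zY : forall n, Y (z n)) (z_small : forall n x, `|z n x| <= 2^-1 ^+ n * `|x|).
Local Notation r := (2^-1 : R).

Definition comb_partial (a : nat -> R) (x : X) : R ^nat := series (fun n => a n * z n x).

Definition series_comb (a : nat -> R) (x : X) : R := limn (comb_partial a x).

Let r_gt0 : 0 < r. Proof. by rewrite invr_gt0. Qed.
Let r_lt1 : r < 1. Proof. by rewrite invf_lt1 // ltr1n. Qed.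

Lemma comb_terms_dominated a x : unit_cube a -> forall n, `|a n * z n x| <= `|x| * r ^+ n.
Proof.
move=> ca n; rewrite normrM; apply: le_trans (ler_wpM2r (normr_ge0 _) (ca n)) _.
by rewrite mul1r mulrC.
Qed.

Lemma series_comb_cvg a x : unit_cube a -> comb_partial a x @ \oo --> series_comb a x.
Proof. by move=> ca; exact: (dominated_series_cvg r_gt0 r_lt1 (@comb_terms_dominated a x ca)). Qed.

Lemma series_comb_tail a x N : unit_cube a ->
  `|series_comb a x - comb_partial a x N| <= 2 * `|x| * r ^+ N.
Proof.
move=> ca; have -> : 2 * `|x| * r ^+ N = `|x| * r ^+ N / (1 - r) by field.
exact: (dominated_series_lim_tail r_gt0 r_lt1 (@comb_terms_dominated a x ca) N).
Qed.

Lemma series_comb_bound a x : unit_cube a -> `|series_comb a x| <= 2 * `|x|.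
Proof.
by move=> ca; have := series_comb_tail x 0 ca; rewrite /comb_partial /series /= big_geq // subr0 mulr1.
Qed.

Lemma comb_partialD a (al : R) x y N :
  comb_partial a (al *: x + y) N = al * comb_partial a x N + comb_partial a y N.
Proof.
rewrite /comb_partial /series /= mulr_sumr -big_split /=; apply: eq_bigr => k _.
by rewrite (dual_space_linear (HY.1 _ (zY k))); ring.
Qed.

Lemma series_comb_linear a : unit_cube a -> linear_form (series_comb a).
Proof.
move=> ca al x y; rewrite /series_comb.
have -> : comb_partial a (al *: x + y) =
    (fun N => al *: comb_partial a x N + comb_partial a y N).
  by apply/funext => N; rewrite comb_partialD.
apply: cvg_lim => //.
exact: cvgD (cvgZ (cvg_cst al) (@series_comb_cvg a x ca)) (@series_comb_cvg a y ca).
Qed.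

Lemma series_comb_dual a : unit_cube a -> dual_space (series_comb a).
Proof.
move=> ca; split; first exact: series_comb_linear.
apply: (linear_form_bounded_continuous (series_comb_linear ca)) => x.
exact: series_comb_bound.
Qed.

Lemma comb_partial_Y a N : Y (fun x => comb_partial a x N).
Proof.
elim: N => [|N IH].
  have -> : (fun x => comb_partial a x 0) = (fun=> 0) by apply/funext => x; rewrite /comb_partial /series /= big_geq.
  exact: HY.2.1.
under eq_fun do rewrite /comb_partial seriesSr.
have YaN := dual_subspaceZ HY (a N) (zY N).
exact: (dual_subspaceD HY IH YaN).
Qed.

Lemma series_comb_Y a : unit_cube a -> Y (series_comb a).
Proof.
move=> ca; apply: Ycl; first exact: series_comb_dual.
move=> e e0; have [N rN] := exists_halfpow_le (divr_gt0 e0 (ltr0Sn _ 1)).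
exists (fun x => comb_partial a x N); first exact: comb_partial_Y.
move=> x; apply: le_trans (series_comb_tail x N ca) _.
rewrite mulrAC ler_wpM2r //; move: rN; rewrite ler_pdivlMr //; lra.
Qed.

Lemma comb_partial_continuous x N :
  continuous (fun a : {ptws nat -> R} => comb_partial a x N).
Proof.
apply: (@continuous_big R^o nat +%R 0 xpredT add_continuous _ (index_iota 0 N)
  (fun k (a : {ptws nat -> R}) => a k * z k x)) => k _ a.
have ak : (fun b : {ptws nat -> R} => b k) @ a --> a k.
  exact: (@proj_continuous nat (fun _ => R) k).
exact: (cvgM ak (cvg_cst (z k x))).
Qed.

Lemma series_comb_continuous : {within (unit_cube : set {ptws nat -> R}),
  continuous (series_comb : {ptws nat -> R} -> {ptws X -> R})}.
Proof.
apply/subspace_continuousP => a0 ca0.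
apply: (proj2 (@pointwise_cvgP X R (series_comb @ within unit_cube (nbhs a0)) (series_comb a0) _)) => x.
apply/cvgrPdist_lt => e e0.
have e3 : 0 < e / 3 by rewrite divr_gt0.
have [N rN] := exists_halfpow_le (divr_gt0 e3 (mulr_gt0 (ltr0Sn _ 1) (ltr_pwDr ltr01 (normr_ge0 x)))).
have tailN : 2 * `|x| * r ^+ N <= e / 3.
  move: rN; rewrite ler_pdivlMr ?mulr_gt0 ?ltr_pwDr //.
  by have := exprn_ge0 N (ltW r_gt0); nra.
have /cvgrPdist_lt /(_ _ e3) := @comb_partial_continuous x N a0.
rewrite /within; apply: filterS => a near_a ca.
have t0 := @series_comb_tail a0 x N ca0; have t1 := @series_comb_tail a x N ca.
rewrite distrC in t1.
apply: le_lt_trans (ler_distD (comb_partial a0 x N) _ _) _.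
apply: le_lt_trans (lerD (lexx _) (ler_distD (comb_partial a x N) _ _)) _.
rewrite /= in near_a; lra.
Qed.

Lemma series_comb_lincomb a b (al be : R) : unit_cube a -> unit_cube b ->
  (fun x => al * series_comb a x + be * series_comb b x) =
  series_comb (fun n => al * a n + be * b n).
Proof.
move=> ca cb; apply/funext => x; rewrite /series_comb.
have -> : comb_partial (fun n => al * a n + be * b n) x =
    (fun N => al * comb_partial a x N + be * comb_partial b x N).
  apply/funext => N; rewrite /comb_partial /series /= !mulr_sumr -big_split /=.
  by apply: eq_bigr => k _; ring.
apply/esym/cvg_lim => //.
exact: cvgD (cvgZ (cvg_cst al) (@series_comb_cvg a x ca)) (cvgZ (cvg_cst be) (@series_comb_cvg b x cb)).
Qed.

Definition unit_vector (n : nat) : nat -> R := fun k => (k == n)%:R.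

Lemma unit_cube_unit_vector n : unit_cube (unit_vector n).
Proof. by move=> k; rewrite /unit_vector; case: (k == n); rewrite ?normr1 ?normr0. Qed.

Lemma series_comb_unit_vector n : series_comb (unit_vector n) = z n.
Proof.
apply/funext => x; apply: cvg_lim => //; apply: cvg_near_cst; near=> m.
have nm : (n < m)%N by near: m; exact: nbhs_infty_gt.
rewrite /comb_partial /series /= (bigD1_seq n) ?mem_index_iota ?iota_uniq //=.
rewrite /unit_vector eqxx mul1r big1 ?addr0 // => k /negPf kn.
by rewrite kn mul0r.
Unshelve. all: by end_near.
Qed.

Definition series_hull : set (X -> R) := series_comb @` unit_cube.

Lemma series_hull_mackey : mackey_family Y series_hull.
Proof.
split; first by move=> _ [a ca <-]; exact: series_comb_Y.
split; last by have := continuous_compact series_comb_continuous (@unit_cube_compact R).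
move=> _ _ al be [a ca <-] [b cb <-] albe; rewrite series_comb_lincomb //.
by exists (fun n => al * a n + be * b n) => //; exact: unit_cube_comb.
Qed.

Lemma series_hull_bound f x : series_hull f -> `|f x| <= 2 * `|x|.
Proof. by move=> [a ca <-]; exact: series_comb_bound. Qed.

Lemma series_hull_z n : series_hull (z n).
Proof. by exists (unit_vector n); [exact: unit_cube_unit_vector | exact: series_comb_unit_vector]. Qed.

End SeriesHull.

Lemma exists_pow2_gt (R : realType) (M : R) : exists n : nat, M < 2 ^+ n.
Proof.
exists (Num.trunc M).+1; apply: lt_trans (truncnS_gt M) _.
by rewrite -natrX ltr_nat ltn_expl.
Qed.

Section CauchyBoundedness.
Variables (R : realType) (X : normedModType R) (Y : set (X -> R)).
Hypotheses (HY : dual_subspace Y) (Ycl : dual_norm_closed Y).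

Definition dual_ball_eventually_bounded (F : set_system X) (c : R) :=
  forall y, Y y -> (forall x, `|y x| <= `|x|) ->
    exists2 A, F A & forall x, A x -> `|y x| <= c.


Lemma mackey_cauchy_no_escape (F : set_system X) (y : nat -> X -> R) :
    ProperFilter F -> mackey_cauchy Y F ->
    (forall n, Y (y n)) -> (forall n x, `|y n x| <= `|x|) ->
  ~ (forall n A, F A -> exists2 x, A x & 4 ^+ n < `|y n x|).
Proof.
(* Rescaled by [2^-n], all the [y n] lie in one member of the Mackey family,
   on which [F] is Cauchy, yet they still escape at rate [2^n]. *)
move=> PF FC Yy y_le1 y_escapes.
pose z n x := 2^-1 ^+ n * y n x.
have z_small n x : `|z n x| <= 2^-1 ^+ n * `|x|.
  by rewrite normrM ger0_norm ?exprn_ge0 // ler_wpM2l ?exprn_ge0.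
have [A FA A_close] := FC _ 1 (series_hull_mackey HY Ycl (fun n => dual_subspaceZ HY _ (Yy n)) z_small) ltr01.
have [x0 Ax0] := filter_ex FA.
have [n n_big] := exists_pow2_gt (2 * `|x0| + 1).
have [x Ax x_big] := y_escapes n A FA.
have zn_x : 2 ^+ n < `|z n x|.
  rewrite normrM ger0_norm ?exprn_ge0 // -ltr_pdivrMl ?exprn_gt0 // -exprVn invrK.
  by rewrite -exprMn (_ : 2 * 2 = 4) //; lra.
have := A_close x x0 Ax Ax0 (z n) (series_hull_z _ n).
have := series_hull_bound z_small x0 (series_hull_z _ n).
by have := ler_norm_dist (z n x) (z n x0); rewrite distrC; lra.
Qed.

Lemma mackey_cauchy_dual_ball_bounded (F : set_system X) :
    ProperFilter F -> mackey_cauchy Y F ->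
  exists2 c : R, 0 < c & dual_ball_eventually_bounded F c.
Proof.
move=> PF FC; apply: contrapT => unbounded.
have escape n : exists y : X -> R, [/\ Y y, forall x, `|y x| <= `|x| &
    forall A, F A -> exists2 x, A x & 4 ^+ n < `|y x|].
  apply: contrapT => no_y; apply: unbounded; exists (4 ^+ n); first exact: exprn_gt0.
  move=> y Yy y_le1; apply: contrapT => no_A; apply: no_y; exists y; split => // A FA.
  apply: contrapT => no_x; apply: no_A; exists A => // x Ax.
  by rewrite leNgt; apply/negP => ?; apply: no_x; exists x.
have [y hy] := choice escape.
have Yy n : Y (y n) by case: (hy n).
have y_le1 n x : `|y n x| <= `|x| by case: (hy n).
by apply: (mackey_cauchy_no_escape PF FC Yy y_le1) => n; case: (hy n).
Qed.

End CauchyBoundedness.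

Section CauchyApproximation.
Variables (R : realType) (X : completeNormedModType R) (Y : set (X -> R)).
Hypothesis HY : dual_subspace Y.
Variables (F : set_system X) (c : R).
Hypotheses (PF : ProperFilter F) (FC : mackey_cauchy Y F) (c_gt0 : 0 < c).
Hypothesis F_bounded : dual_ball_eventually_bounded Y F c.
Variables (K : set (X -> R)) (e : R).
Hypotheses (fK : mackey_family Y K) (e_gt0 : 0 < e).

Section AtCauchyPoint.
Variables (AK : set X) (x0 : X).
Hypotheses (FAK : F AK) (AK_close : forall x y, AK x -> AK y -> mackey_close Y K (e / 4) x y).
Hypothesis AKx0 : AK x0.

Lemma cauchy_point_bound f (L : R) : K f -> 0 < L -> (forall x, `|f x| <= L * `|x|) ->
  `|f x0| <= c * L + e / 4.
Proof.
(* [f / L] is in the unit ball of [Y], so it is eventually bounded by [c]. *)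
move=> Kf L0 fL; have Li : 0 <= L^-1 by rewrite invr_ge0 ltW.
have [Af FAf Af_bound] : exists2 A, F A & forall x, A x -> `|L^-1 * f x| <= c.
  have YLf := dual_subspaceZ HY L^-1 (fK.1 f Kf).
  apply: F_bounded; first exact: YLf.
  by move=> x; rewrite normrM (ger0_norm Li) ler_pdivrMl.
have [x1 [Afx1 AKx1]] := filter_ex (filterI FAf FAK).
have := Af_bound x1 Afx1; rewrite normrM (ger0_norm Li) ler_pdivrMl // => fx1.
apply: le_trans (ler_norm_dist (f x0) (f x1)) _; rewrite mulrC lerD //.
exact/ltW/(AK_close AKx1 AKx0).
Qed.

Lemma exists_ball_point_below f : K f -> exists2 z : X, `|z| <= c & f z - f x0 < e.
Proof.
move=> Kf; have Df : dual_space f by apply: HY.1; apply: fK.1.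
have lf := dual_space_linear Df.
have [fx0_ge0|fx0_lt0] := lerP 0 (f x0).
  exists 0; first by rewrite normr0 ltW.
  by rewrite (linear_form0 lf) sub0r ltrNl (lt_le_trans _ fx0_ge0) // oppr_lt0.
(* Otherwise [|f| <= - f x0 - e] on the [c]-ball, which makes the norm of [f]
   too small for [cauchy_point_bound]. *)
apply: contrapT => no_z; pose m := - f x0 - e.
have f_ball w : `|w| <= c -> `|f w| <= m.
  move=> wc; have h1 : e <= f w - f x0.
    by rewrite leNgt; apply/negP => ?; apply: no_z; exists w.
  have h2 : e <= - f w - f x0.
    rewrite -(linear_formN lf) leNgt; apply/negP => ?.
    by apply: no_z; exists (- w); rewrite ?normrN.
  by rewrite ler_norml /m; apply/andP; split; lra.
have m_ge0 : 0 <= m by have := f_ball 0; rewrite normr0 (linear_form0 lf) normr0; apply; exact: ltW.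
pose L := (m + e / 4) / c.
have fL x : `|f x| <= L * `|x|.
  apply: le_trans (linear_form_ball_bound lf c_gt0 f_ball x) _.
  by rewrite ler_wpM2r // ler_pM2r ?invr_gt0 // lerDl divr_ge0 // ltW.
have L_gt0 : 0 < L by rewrite divr_gt0 // ltr_wpDl // divr_gt0.
have := cauchy_point_bound Kf L_gt0 fL.
rewrite (_ : c * L = m + e / 4); last by rewrite /L mulrC divfK ?gt_eqF.
have := e_gt0; rewrite ltr0_norm // /m; lra.
Qed.

End AtCauchyPoint.

Lemma mackey_cauchy_ball_approx A : F A ->
  exists2 x0, A x0 & exists2 w : X, `|w| <= c & forall f, K f -> `|f w - f x0| < e.
Proof.
move=> FA; have [KY [acK cK]] := fK.
have KD : K `<=` @dual_space R X by move=> f /KY; exact: HY.1.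
have [AK FAK AK_close] := FC fK (divr_gt0 e_gt0 (ltr0Sn _ 3)).
have [x0 [Ax0 AKx0]] := filter_ex (filterI FA FAK); exists x0 => //.
have [D D_ball K_cover] : exists2 D : seq X, (forall z, z \in D -> `|z| <= c) &
    forall f, K f -> exists2 z, z \in D & f z - f x0 < e.
  apply: (@compact_finite_subcover _ (K : set {ptws X -> R}) X [set z : X | `|z| <= c]
    (fun z => [set g : {ptws X -> R} | g z - g x0 < e]) cK) => [z _|f Kf].
    apply: (@open_comp _ _ (fun g : {ptws X -> R} => g z - g x0) [set x | x < e]) => [g _|].
      exact: ptws_evalB_continuous.
    exact: open_lt.
  have [z zc fz] := exists_ball_point_below FAK AK_close AKx0 Kf.
  by exists z.
have [w wc Kw] : exists2 w : X, `|w| <= c & forall f, K f -> f w - f x0 < e.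
  apply: (minimax_ball (ltW c_gt0) _ KD (abs_convex_convex acK) cK) => [z /D_ball //|f Kf].
  by have [z Dz fz] := K_cover f Kf; exists z.
exists w => // f Kf; rewrite ltr_norml; have := Kw _ (abs_convexN acK Kf); have := Kw f Kf.
by move=> /=; lra.
Qed.

End CauchyApproximation.

Section ApproximatingFilter.
Variables (R : realType) (X : completeNormedModType R) (Y : set (X -> R)).
Hypothesis HY : dual_subspace Y.
Variables (F : set_system X) (c : R).
Hypotheses (PF : ProperFilter F) (FC : mackey_cauchy Y F) (c_gt0 : 0 < c).
Hypothesis F_bounded : dual_ball_eventually_bounded Y F c.

Local Notation B := (mackey_closure Y [set z : X | `|z| <= c]).

(* The traces of the Mackey neighbourhoods of [F] on [B]. *)
Definition approx_index := [set i : set X * set (X -> R) * R |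
  [/\ F i.1.1, mackey_family Y i.1.2 & 0 < i.2]].

Definition approx_set (i : set X * set (X -> R) * R) : set X :=
  B `&` [set x | exists2 a, i.1.1 a & mackey_close Y i.1.2 i.2 a x].

Definition approx_filter : set_system X := filter_from approx_index approx_set.

Lemma approx_index_directed i j : approx_index i -> approx_index j ->
  exists2 k, approx_index k & approx_set k `<=` approx_set i `&` approx_set j.
Proof.
move: i j => [[A1 K1] e1] [[A2 K2] e2] [/= FA1 fK1 e1_gt0] [/= FA2 fK2 e2_gt0].
have [K [fK K1K K2K]] := mackey_family_directed HY fK1 fK2.
exists (A1 `&` A2, K, Num.min e1 e2); first by split => //=; [exact: filterI | rewrite lt_min e1_gt0].
move=> x [/= Bx [a [A1a A2a] ax]]; split; split => //; exists a => // f Kf.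
  by apply: lt_le_trans (ax f (K1K f Kf)) _; rewrite ge_min lexx.
by apply: lt_le_trans (ax f (K2K f Kf)) _; rewrite ge_min lexx orbT.
Qed.

Lemma approx_filter_proper : ProperFilter approx_filter.
Proof.
apply: filter_from_proper; last first.
  move=> [[A K] e] [/= FA fK e_gt0].
  have [x0 Ax0 [w wc Kw]] := mackey_cauchy_ball_approx HY PF FC c_gt0 F_bounded fK e_gt0 FA.
  exists w; split; first by move=> K' e' _ e'_gt0; exists w => // f _; rewrite subrr normr0.
  by exists x0 => // f Kf; rewrite distrC; exact: Kw.
apply: filter_from_filter; last exact: approx_index_directed.
by exists (setT, set0, 1); split => //=; [exact: filterT | exact: mackey_family0].
Qed.

Lemma approx_filter_mackey_closure : approx_filter B.
Proof.
exists (setT, set0, 1); last by move=> x [].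
by split => //=; [exact: filterT | exact: mackey_family0].
Qed.

Lemma approx_filter_cauchy : mackey_cauchy Y approx_filter.
Proof.
move=> K e fK e_gt0; have e3 : 0 < e / 3 by rewrite divr_gt0.
have [A FA A_close] := FC fK e3.
exists (approx_set (A, K, e / 3)); first by exists (A, K, e / 3).
move=> x y [_ /= [a Aa ax]] [_ /= [b Ab b_y]].
rewrite (_ : e = e / 3 + e / 3 + e / 3); last by field.
apply: mackey_close_trans (mackey_close_trans (mackey_close_sym ax) (A_close a b Aa Ab)) b_y.
Qed.

Lemma approx_filter_limit x : mackey_converges Y approx_filter x -> mackey_converges Y F x.
Proof.
move=> Hx K e fK e_gt0; have e3 : 0 < e / 3 by rewrite divr_gt0.
have [A FA A_close] := FC fK e3.
have HA : approx_filter (approx_set (A, K, e / 3)) by exists (A, K, e / 3).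
have HF := approx_filter_proper.
have [w [[_ [a Aa aw]] wx]] := filter_ex (filterI HA (Hx K _ fK e3)).
apply: filterS FA => y Ay; rewrite /= (_ : e = e / 3 + e / 3 + e / 3); last by field.
exact: mackey_close_trans (mackey_close_trans (A_close y a Ay Aa) aw) wx.
Qed.

End ApproximatingFilter.

Lemma mackey_closed_complete (R : realType) (X : normedModType R) (Y : set (X -> R))
    (S : set X) : mackey_complete Y -> mackey_closed Y S -> mackey_complete_set Y S.
Proof.
move=> C Scl F PF FS FC; have [x _ Fx] := C F PF filterT FC.
exists x => //; apply: Scl => K e fK e_gt0.
have /filter_ex [s [Ss sx]] : F (S `&` [set y | mackey_close Y K e y x]).
  by apply: filterI => //; exact: Fx.
by exists s.
Qed.

Lemma mackey_quasi_complete_complete (R : realType) (X : completeNormedModType R)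
    (Y : set (X -> R)) : dual_subspace Y -> dual_norm_closed Y ->
  mackey_quasi_complete Y -> mackey_complete Y.
Proof.
move=> HY Ycl QC F PF _ FC.
have [c c_gt0 F_bounded] := mackey_cauchy_dual_ball_bounded HY Ycl PF FC.
have HF := approx_filter_proper HY PF FC c_gt0 F_bounded.
have Bbounded := mackey_closure_bounded (mackey_bounded_ball c HY).
have Bclosed := @mackey_closure_closed _ _ Y [set z : X | `|z| <= c].
have [x _ Hx] := QC _ Bbounded Bclosed _ HF
  (approx_filter_mackey_closure Y c PF) (approx_filter_cauchy c FC).
by exists x => //; apply: (approx_filter_limit HY PF FC c_gt0 F_bounded).
Qed.

Unset Implicit Arguments.

Theorem proposition2p5 (R : realType) (X : completeNormedModType R)
    (Y : set (X -> R)) :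
  dual_subspace Y -> weak_star_dense Y -> dual_norm_closed Y ->
  (mackey_quasi_complete Y <-> mackey_complete Y).
Proof.
move=> HY _ Ycl; split; first exact: mackey_quasi_complete_complete.
by move=> C S _; exact: mackey_closed_complete.
Qed.
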